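(* Let $n\ge2$, $\mathcal{L}_n=\{(i,j)\in[n]^2:i>j\}$, $\bar n=|\mathcal{L}_n|=n(n-1)/2$. For $\Omega\in[0,1]^{\mathcal{L}_n}$ let $P^{(\bar n)}_\Omega=\bigotimes_{(i,j)\in\mathcal{L}_n}\mathrm{Bern}(\Omega_{i,j})$ be the distribution of $Y=(Y_{i,j})_{(i,j)\in\mathcal{L}_n}\in\{0,1\}^{\mathcal{L}_n}$, and let $q^\natural(\Omega,Y)=\prod_{(i,j)\in\mathcal{L}_n}e^{-(Y_{i,j}-\Omega_{i,j})^2}$. Let $\bar\rho>0$. Then for all $\Omega_0,\Omega_1\in[0,1]^{\mathcal{L}_n}$, $$P^{(\bar n)}_{\Omega_0}\Big(\frac{q^\natural(\Omega_1,Y)}{q^\natural(\Omega_0,Y)}\Big)\le e^{-\frac12\bar nd^2(\Omega_0,\Omega_1)},\qquad P^{(\bar n)}_{\Omega_0}\Big(\frac{q^\natural(\Omega_0,Y)}{q^\natural(\Omega_1,Y)}\Big)^{\bar\rho}\le e^{\frac{\bar\rho(\bar\rho+2)}{2}\bar nd^2(\Omega_0,\Omega_1)},$$ where $d(\Omega_0,\Omega_1)=\big(\frac{2}{n(n-1)}\sum_{(i,j)\in\mathcal{L}_n}(\Omega_{0,i,j}-\Omega_{1,i,j})^2\big)^{1/2}$.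
   Context: $P g$ denotes the expectation of $g$ under $P$. *)

From mathcomp Require Import all_boot all_order all_algebra.
From mathcomp Require Import all_classical all_reals all_analysis.
Set Implicit Arguments. Unset Strict Implicit. Unset Printing Implicit Defensive.
Import Order.TTheory GRing.Theory Num.Theory.
Local Open Scope ring_scope.

Definition Ln (n : nat) := {p : 'I_n * 'I_n | (p.2 < p.1)%N}.

Definition param01 (R : realType) n (Om : {ffun Ln n -> R}) :=
  forall l, 0 <= Om l <= 1.

Definition nbar (n : nat) : nat := #|{: Ln n}|.

Definition bern_pmf (R : realType) (p : R) (y : bool) : R :=
  if y then p else 1 - p.

Definition EP (R : realType) n (Om : {ffun Ln n -> R})
  (g : {ffun Ln n -> bool} -> R) : R :=
  \sum_(Y : {ffun Ln n -> bool}) (\prod_(l : Ln n) bern_pmf (Om l) (Y l)) * g Y.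

Definition qnat (R : realType) n (Om : {ffun Ln n -> R}) (Y : {ffun Ln n -> bool}) : R :=
  \prod_(l : Ln n) expR (- ((Y l)%:R - Om l) ^+ 2).

Definition dist (R : realType) n (Om0 Om1 : {ffun Ln n -> R}) : R :=
  Num.sqrt (2 / (n * (n - 1))%:R * \sum_(l : Ln n) (Om0 l - Om1 l) ^+ 2).

From mathcomp Require Import all_boot all_order all_algebra.
From mathcomp Require Import all_classical all_reals all_analysis.
From mathcomp Require Import ring lra.
Import Order.TTheory GRing.Theory Num.Theory.
Local Open Scope ring_scope.

(* The ratios of [qnat] are exponentials of sums over coordinates, so their
   expectations under the product Bernoulli law factorise.  In a coordinate
   with parameters [p], [q] and exponent [t],
     t ((y - p)^2 - (y - q)^2) = 2 t (q - p) (y - p) - t (p - q)^2,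
   and Hoeffding's lemma [E e^{s (Y - p)} <= e^{s^2/8}] for [Y ~ Bern p]
   bounds the expectation of its exponential by [e^{(t^2/2 - t) (p - q)^2}].
   Taking [t = 1] and [t = -rho] gives the two bounds, as
   [nbar * d^2 = sum (Om0 - Om1)^2]. *)

Section DeriveSign.
Context {R : realType}.
Context {f df : R -> R}.
Hypothesis f_df : forall x, is_derive x (1 : R) f (df x).

Lemma is_derive_MVT {a b : R} : a <= b ->
  exists2 c, a <= c <= b & f b - f a = df c * (b - a).
Proof.
move=> ab; have [|c cab ->] := MVT_segment ab (fun x _ => f_df x).
  by apply: derivable_within_continuous => x _; case: (f_df x).
by exists c; rewrite // -in_itv.
Qed.

Lemma is_derive_ge0_homo : (forall x, 0 <= df x) -> {homo f : x y / x <= y}.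
Proof.
move=> df_ge0 x y xy; have [c _ fyx] := is_derive_MVT xy.
by rewrite -subr_ge0 fyx mulr_ge0 // subr_ge0.
Qed.

Lemma is_derive_sign_min a : (forall x, x <= a -> df x <= 0) ->
  (forall x, a <= x -> 0 <= df x) -> forall x, f a <= f x.
Proof.
move=> df_le0 df_ge0 x; have [ax|xa] := lerP a x.
  have [c /andP[ac _] fxa] := is_derive_MVT ax.
  by rewrite -subr_ge0 fxa mulr_ge0 ?df_ge0 // subr_ge0.
have [c /andP[_ ca] fax] := is_derive_MVT (ltW xa).
by rewrite -subr_le0 fax mulr_le0_ge0 ?df_le0 // subr_ge0 ltW.
Qed.

End DeriveSign.

Section BernoulliHoeffding.
Context {R : realType}.
Variable p : R.
Hypotheses (p_ge0 : 0 <= p) (p_le1 : p <= 1).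

Let mgf (s : R) := p * expR s + (1 - p).

Let mgf_gt0 s : 0 < mgf s.
Proof.
rewrite /mgf; have [p_lt1|p_eq1] := ltrP p 1.
  by rewrite ltr_wpDl ?subr_gt0 // mulr_ge0 // expR_ge0.
have -> : p = 1 by apply/le_anti; rewrite p_le1 p_eq1.
by rewrite mul1r subrr addr0 expR_gt0.
Qed.

(* [gap] is [s^2/8 - ln E e^{s(Y - p)}] for [Y ~ Bern p]; its derivative is
   [gap'], whose own derivative is nonnegative by AM-GM. *)
Let gap (s : R) := s ^+ 2 / 8 + s * p - ln (mgf s).
Let gap' (s : R) := s / 4 + p - p * expR s / mgf s.

Let gap'' (s : R) := 4^-1 - p * expR s * (1 - p) / mgf s ^+ 2.

Let is_derive_gap s : is_derive s (1 : R) gap (gap' s).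
Proof.
have mgf'_s : is_derive s (1 : R) mgf (p * expR s).
  by rewrite /mgf; apply: is_derive_eq; rewrite addr0.
have ln_mgf' := is_derive1_ln (mgf_gt0 s).
rewrite /gap; apply: is_derive_eq.
have mgf_neq0 : mgf s != 0 by rewrite gt_eqF // mgf_gt0.
by rewrite /GRing.scale /= /gap' /mgf in mgf_neq0 *; field.
Qed.

Let is_derive_gap' s : is_derive s (1 : R) gap' (gap'' s).
Proof.
have mgf'_s : is_derive s (1 : R) mgf (p * expR s).
  by rewrite /mgf; apply: is_derive_eq; rewrite addr0.
have mgfV' : is_derive s (1 : R) (fun x => (mgf x)^-1) (- (mgf s)^-2 *: (p * expR s)).
  by apply: is_deriveV; rewrite // gt_eqF // mgf_gt0.
rewrite /gap'; apply: is_derive_eq.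
have mgf_neq0 : mgf s != 0 by rewrite gt_eqF // mgf_gt0.
by rewrite /GRing.scale /= /gap'' /mgf in mgf_neq0 *; field.
Qed.

Let gap''_ge0 s : 0 <= gap'' s.
Proof.
have mgf_s_gt0 := mgf_gt0 s.
rewrite subr_ge0 ler_pdivrMr ?exprn_gt0 //.
have := sqr_ge0 (p * expR s - (1 - p)).
by rewrite /mgf in mgf_s_gt0 *; set e := expR s; nra.
Qed.

Let mgf0 : mgf 0 = 1.
Proof. by rewrite /mgf expR0 mulr1 addrC subrK. Qed.

Let gap'0 : gap' 0 = 0.
Proof. by rewrite /gap' mgf0 expR0 divr1 mulr1 mul0r add0r subrr. Qed.

Let gap0 : gap 0 = 0.
Proof. by rewrite /gap mgf0 ln1 expr0n /= !mul0r addr0 subr0. Qed.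

Let gap_ge0 s : 0 <= gap s.
Proof.
have gap'_homo := is_derive_ge0_homo is_derive_gap' gap''_ge0.
rewrite -gap0; apply: (is_derive_sign_min is_derive_gap) => x x0.
  by rewrite -gap'0 gap'_homo.
by rewrite -gap'0 gap'_homo.
Qed.

Lemma bernoulli_hoeffding s :
  \sum_(b : bool) bern_pmf p b * expR (s * (b%:R - p)) <= expR (s ^+ 2 / 8).
Proof.
rewrite big_bool /bern_pmf /= sub0r mulrN.
have -> : p * expR (s * (1 - p)) + (1 - p) * expR (- (s * p))
    = expR (- (s * p)) * mgf s by rewrite /mgf mulrBr mulr1 expRD; ring.
rewrite -[mgf s]lnK ?posrE // -expRD ler_expR.
by have := gap_ge0 s; rewrite /gap; lra.
Qed.

End BernoulliHoeffding.

Section QnatRatio.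
Context {R : realType}.

Lemma bern_pmf_ge0 (p : R) b : 0 <= p <= 1 -> 0 <= bern_pmf p b.
Proof. by case/andP=> p_ge0 p_le1; case: b; rewrite /bern_pmf // subr_ge0. Qed.

Lemma EP_prod n (Om : {ffun Ln n -> R}) (G : Ln n -> bool -> R) :
  EP Om (fun Y => \prod_l G l (Y l))
  = \prod_l \sum_(b : bool) bern_pmf (Om l) b * G l b.
Proof.
rewrite /EP (bigA_distr_bigA (fun l b => bern_pmf (Om l) b * G l b)).
by apply: eq_bigr => Y _; rewrite big_split.
Qed.

Definition log_qratio (p q : R) (b : bool) : R := (b%:R - p) ^+ 2 - (b%:R - q) ^+ 2.

Lemma qnat_ratioE n (Om0 Om1 : {ffun Ln n -> R}) Y :
  qnat Om1 Y / qnat Om0 Y = expR (\sum_l log_qratio (Om0 l) (Om1 l) (Y l)).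
Proof.
rewrite /qnat -!expR_sum -expRB -sumrB; congr expR.
by apply: eq_bigr => l _; rewrite /log_qratio opprK addrC.
Qed.

Lemma bern_expR_log_qratio_le (p q t : R) : 0 <= p <= 1 ->
  \sum_(b : bool) bern_pmf p b * expR (t * log_qratio p q b)
  <= expR ((t ^+ 2 / 2 - t) * (p - q) ^+ 2).
Proof.
case/andP=> p_ge0 p_le1; set s := 2 * t * (q - p).
have split_log b : t * log_qratio p q b = - (t * (p - q) ^+ 2) + s * (b%:R - p).
  by rewrite /log_qratio /s; ring.
have -> : (t ^+ 2 / 2 - t) * (p - q) ^+ 2 = - (t * (p - q) ^+ 2) + s ^+ 2 / 8.
  by rewrite /s; field.
under eq_bigr => b _ do rewrite split_log expRD mulrCA.
by rewrite -mulr_sumr expRD ler_pM2l ?expR_gt0 ?bernoulli_hoeffding.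
Qed.

Lemma EP_expR_log_qratio_le n (Om0 Om1 : {ffun Ln n -> R}) (t : R) :
  param01 Om0 ->
  EP Om0 (fun Y => expR (t * \sum_l log_qratio (Om0 l) (Om1 l) (Y l)))
  <= expR ((t ^+ 2 / 2 - t) * \sum_l (Om0 l - Om1 l) ^+ 2).
Proof.
move=> Om0_01.
under [X in EP _ X]funext => Y do rewrite mulr_sumr expR_sum.
rewrite (EP_prod _ Om0 (fun l b => expR (t * log_qratio (Om0 l) (Om1 l) b))).
rewrite mulr_sumr expR_sum; apply: ler_prod => l _.
rewrite bern_expR_log_qratio_le // andbT.
by apply: sumr_ge0 => b _; rewrite mulr_ge0 ?bern_pmf_ge0 ?expR_ge0.
Qed.

End QnatRatio.

Lemma card_Ln n : nbar n = 'C(n, 2).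
Proof.
rewrite /nbar card_sig -sum1_card -bin2_sum big_mkord.
rewrite -(pair_big_dep xpredT (fun i j : 'I_n => (j < i)%N) (fun _ _ => 1%N)) /=.
apply: eq_bigr => i _.
by rewrite -(big_ord_widen _ (fun _ => 1%N) (ltnW (ltn_ord i))) sum1_card card_ord.
Qed.

Lemma nbar_dist2 (R : realType) n (Om0 Om1 : {ffun Ln n -> R}) :
  (nbar n)%:R * dist Om0 Om1 ^+ 2 = \sum_l (Om0 l - Om1 l) ^+ 2.
Proof.
have S_ge0 : 0 <= \sum_l (Om0 l - Om1 l) ^+ 2 by apply: sumr_ge0 => l _; exact: sqr_ge0.
rewrite /dist sqr_sqrtr ?mulr_ge0 ?divr_ge0 //.
have [nbar0|nbar_gt0] := posnP (nbar n).
  by rewrite nbar0 mul0r big_pred0 // => l; have := card0_eq nbar0 l.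
have nbar2 : (n * (n - 1) = 2 * nbar n)%N by rewrite card_Ln -mul_bin_diag bin1 subn1.
have nbar_neq0 : (nbar n)%:R != 0 :> R by rewrite pnatr_eq0 -lt0n.
by rewrite nbar2 natrM; field.
Qed.

Theorem lemma7p3 (R : realType) (n : nat) (rho : R)
  (Om0 Om1 : {ffun Ln n -> R}) :
  (2 <= n)%N -> 0 < rho -> param01 Om0 -> param01 Om1 ->
  EP Om0 (fun Y => qnat Om1 Y / qnat Om0 Y)
    <= expR (- (1 / 2) * (nbar n)%:R * dist Om0 Om1 ^+ 2)
  /\
  EP Om0 (fun Y => powR (qnat Om0 Y / qnat Om1 Y) rho)
    <= expR (rho * (rho + 2) / 2 * (nbar n)%:R * dist Om0 Om1 ^+ 2).
Proof.
move=> _ _ Om0_01 _.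
set S := \sum_l (Om0 l - Om1 l) ^+ 2.
set logq := fun Y : {ffun Ln n -> bool} => \sum_l log_qratio (Om0 l) (Om1 l) (Y l).
have exponentE c : c * (nbar n)%:R * dist Om0 Om1 ^+ 2 = c * S.
  by rewrite -mulrA nbar_dist2.
split.
- have -> : (fun Y => qnat Om1 Y / qnat Om0 Y) = fun Y => expR (1 * logq Y).
    by apply/funext => Y; rewrite mul1r qnat_ratioE.
  rewrite exponentE (_ : - (1 / 2) = 1 ^+ 2 / 2 - 1); last by field.
  exact: EP_expR_log_qratio_le.
- have -> : (fun Y => powR (qnat Om0 Y / qnat Om1 Y) rho) = fun Y => expR (- rho * logq Y).
    by apply/funext => Y; rewrite -invf_div qnat_ratioE -expRN -expRM mulrC mulrN mulNr.
  rewrite exponentE (_ : rho * (rho + 2) / 2 = (- rho) ^+ 2 / 2 - (- rho)); last by field.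
  exact: EP_expR_log_qratio_le.
Qed.
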